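(* Let $a>0$. If either ($b\ge a+\frac12$ and $c\ge 2a$) or ($b\ge 2a$ and $c\ge a+\frac12$), subject to the condition $b+c>3a+\frac12$, then $(a,b,c)\in\mathcal{P}_{1,2}$. Moreover: (i) $(a,b,2a)\in\mathcal{P}_{1,2}$ if and only if $b>a+\frac12$, and for every $\delta>0$ and $x>0$, $${}_1F_2\left(a\,;a+\tfrac12+\delta,\,2a\,;-\tfrac{x^2}{4}\right)=\frac{2}{B\left(\delta,a+\frac12\right)}\int_0^1\mathbb{J}_{a-\frac12}^2\left(\frac{xt}{2}\right)(1-t^2)^{\delta-1}t^{2a}\,dt>0.$$ (ii) $(a,a+\frac12,c)\in\mathcal{P}_{1,2}$ if and only if $c>2a$, and for every $\epsilon>0$ and $x>0$, $${}_1F_2\left(a\,;a+\tfrac12,\,2a+\epsilon\,;-\tfrac{x^2}{4}\right)=\frac{2}{B(\epsilon,2a)}\int_0^1\mathbb{J}_{a-\frac12}^2\left(\frac{xt}{2}\right)(1-t^2)^{\epsilon-1}t^{4a-1}\,dt>0.$$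
   Context: For $a,b,c>0$, ${}_1F_2\left(a\,;b,c\,;-\frac{x^2}{4}\right)=\sum_{k=0}^\infty \frac{(a)_k}{k!\,(b)_k(c)_k}\left(-\frac{x^2}{4}\right)^k$, where $(\alpha)_k=\Gamma(\alpha+k)/\Gamma(\alpha)$. $\mathcal{P}_{1,2}$ denotes the set of all triples $(a,b,c)$ of positive reals such that this function is $>0$ for all $x>0$. For $\alpha>-1$, $\mathbb{J}_\alpha(x)={}_0F_1\left(\alpha+1\,;-\frac{x^2}{4}\right)=\Gamma(\alpha+1)(x/2)^{-\alpha}J_\alpha(x)$, with $J_\alpha$ the Bessel function of the first kind. $B$ denotes Euler's beta function. *)

From Stdlib Require Import Reals Factorial.
From Coquelicot Require Import Coquelicot.
Open Scope R_scope.

Fixpoint poch (alpha : R) (k : nat) : R :=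
  match k with
  | O => 1
  | S k' => poch alpha k' * (alpha + INR k')
  end.

(* 1F2(a; b, c; -x^2/4) as the sum of its power series. *)
Definition F12 (a b c x : R) : R :=
  Series (fun k => poch a k / (INR (Factorial.fact k) * poch b k * poch c k)
                   * (- x ^ 2 / 4) ^ k).

Definition P12 (a b c : R) : Prop :=
  0 < a /\ 0 < b /\ 0 < c /\ (forall x, 0 < x -> 0 < F12 a b c x).

(* Normalized Bessel function JJ_alpha(x) = 0F1(alpha+1; -x^2/4). *)
Definition JJ (alpha x : R) : R :=
  Series (fun k => (- x ^ 2 / 4) ^ k / (INR (Factorial.fact k) * poch (alpha + 1) k)).

Definition Beta (p q : R) : R :=
  RInt_gen (fun t => Rpower t (p - 1) * Rpower (1 - t) (q - 1))
           (at_right 0) (at_left 1).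

(* Let w(r,q;t) = t^(2r-1) (1-t^2)^(q-1) on (0,1) and M(r,q) = \int_0^1 w(r,q;t) dt = B(q,r)/2.
   Integrating by parts gives M(r+1,q) = r/(r+q) M(r,q), so integrating the series of
   1F2(a;b,c;-x^2 t^2/4) termwise against w(c,q;.) yields
     \int_0^1 1F2(a;b,c;-x^2 t^2/4) w(c,q;t) dt = M(c,q) 1F2(a;b,c+q;-x^2/4).
   Hence raising a denominator parameter turns a nonnegative 1F2 into a positive one.
   The starting point is the Clausen-type product formula
     JJ_(a-1/2)(x/2)^2 = 1F2(a; a+1/2, 2a; -x^2/4),
   proved with a Zeilberger recurrence for the Cauchy square of the Bessel series; raising b
   and/or c from (a+1/2, 2a) gives the sufficient condition.  Conversely, x^a JJ_(a-1/2)(x)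
   solves y'' + (1 - a(a-1)/x^2) y = 0, so Sturm comparison with sin(x/2) produces a positive
   zero of JJ_(a-1/2).  Then 1F2(a; a+1/2, 2a; .) vanishes somewhere, which rules out any
   triple from which it could be reached by raising b or c. *)

From Stdlib Require Import Reals Lra Lia Psatz Factorial Classical.
From Coquelicot Require Import Coquelicot.
Open Scope R_scope.

Lemma poch_pos (al : R) (k : nat) : 0 < al -> 0 < poch al k.
Proof.
  intros Hal. induction k as [|k IH]; simpl; [lra|].
  apply Rmult_lt_0_compat; [exact IH|]. pose proof (pos_INR k). lra.
Qed.

Lemma CV_radius_infinite_ratio_le (d : nat -> R) (K : R) :
  (forall n, d n <> 0) -> (forall n, Rabs (d (S n) / d n) <= K / INR (S n)) ->
  CV_radius d = p_infty.
Proof.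
  intros Hd HK. apply CV_radius_infinite_DAlembert; [exact Hd|].
  apply is_lim_seq_le_le with (u := fun _ => 0) (w := fun n => K / INR (S n)).
  - intros n. split; [apply Rabs_pos | apply HK].
  - apply is_lim_seq_const.
  - replace (Finite 0) with (Rbar_mult K (Rbar_inv p_infty)) by (simpl; f_equal; ring).
    apply (is_lim_seq_scal_l (fun n => / INR (S n))).
    apply (is_lim_seq_incr_1 (fun n => / INR n)).
    apply is_lim_seq_inv; [apply is_lim_seq_INR | discriminate].
Qed.

Definition F12_coef (a b c : R) (k : nat) : R :=
  poch a k / (INR (fact k) * poch b k * poch c k).

Lemma F12_PSeries (a b c x : R) : F12 a b c x = PSeries (F12_coef a b c) (- x ^ 2 / 4).
Proof. reflexivity. Qed.

Lemma F12_coef_pos (a b c : R) (k : nat) : 0 < a -> 0 < b -> 0 < c -> 0 < F12_coef a b c k.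
Proof.
  intros Ha Hb Hc. unfold F12_coef. pose proof (INR_fact_lt_0 k).
  pose proof (poch_pos a k Ha). pose proof (poch_pos b k Hb). pose proof (poch_pos c k Hc).
  apply Rdiv_lt_0_compat; [lra|]. apply Rmult_lt_0_compat; [apply Rmult_lt_0_compat|]; lra.
Qed.

Lemma F12_coef_S (a b c : R) (k : nat) : 0 < b -> 0 < c ->
  F12_coef a b c (S k) = F12_coef a b c k * (a + INR k) / (INR (S k) * (b + INR k) * (c + INR k)).
Proof.
  intros Hb Hc. unfold F12_coef. rewrite fact_simpl, mult_INR. simpl poch.
  pose proof (INR_fact_lt_0 k). pose proof (poch_pos b k Hb). pose proof (poch_pos c k Hc).
  pose proof (pos_INR k). rewrite S_INR. field. repeat split; lra.
Qed.

Lemma CV_radius_F12_coef (a b c : R) : 0 < a -> 0 < b -> 0 < c ->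
  CV_radius (F12_coef a b c) = p_infty.
Proof.
  intros Ha Hb Hc. apply CV_radius_infinite_ratio_le with (K := (a + b) / (b * c)).
  - intros n. apply Rgt_not_eq, F12_coef_pos; assumption.
  - intros n. rewrite F12_coef_S, S_INR by assumption.
    pose proof (F12_coef_pos a b c n Ha Hb Hc). pose proof (pos_INR n) as Hk. set (k := INR n) in *.
    replace (F12_coef a b c n * (a + k) / ((k + 1) * (b + k) * (c + k)) / F12_coef a b c n)
      with ((a + k) / ((k + 1) * (b + k) * (c + k))) by (field; repeat split; lra).
    rewrite Rabs_pos_eq by (apply Rlt_le, Rdiv_lt_0_compat; [|repeat apply Rmult_lt_0_compat]; lra).
    apply Rle_div_l; [repeat apply Rmult_lt_0_compat; lra|].
    replace ((a + b) / (b * c) / (k + 1) * ((k + 1) * (b + k) * (c + k)))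
      with ((a + b) * (b + k) * (c + k) / (b * c)) by (field; lra).
    apply Rle_div_r; [nra|].
    assert (0 <= (a + b) * (b + k) * k) by (apply Rmult_le_pos; [apply Rmult_le_pos|]; lra).
    assert (0 <= c * (a * k + b * b)) by (apply Rmult_le_pos; nra).
    nra.
Qed.

(** * Improper integrals over (0,1) *)

Section RealLimits.
Context {T : Type} {F : (T -> Prop) -> Prop} {FF : Filter F}.

Lemma filterlim_R_plus (f g : T -> R) (lf lg : R) :
  filterlim f F (locally lf) -> filterlim g F (locally lg) ->
  filterlim (fun x => f x + g x) F (locally (lf + lg)).
Proof. intros Hf Hg. exact (filterlim_comp_2 f g Rplus Hf Hg (filterlim_plus lf lg)). Qed.

Lemma filterlim_R_scal (c : R) (f : T -> R) (l : R) :
  filterlim f F (locally l) -> filterlim (fun x => c * f x) F (locally (c * l)).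
Proof. intros Hf. eapply filterlim_comp; [exact Hf | exact (filterlim_scal_r c l)]. Qed.

Lemma filterlim_R_minus (f g : T -> R) (lf lg : R) :
  filterlim f F (locally lf) -> filterlim g F (locally lg) ->
  filterlim (fun x => f x - g x) F (locally (lf - lg)).
Proof.
  intros Hf Hg. replace (lf - lg) with (lf + -1 * lg) by ring.
  apply (filterlim_ext (fun x => f x + -1 * g x)); [intros; ring|].
  apply filterlim_R_plus; [exact Hf | now apply filterlim_R_scal].
Qed.

End RealLimits.

Lemma continuous_R_plus (f g : R -> R) (x : R) :
  continuous f x -> continuous g x -> continuous (fun y => f y + g y) x.
Proof. exact (@continuous_plus R_UniformSpace R_AbsRing R_NormedModule f g x). Qed.

Lemma continuous_R_minus (f g : R -> R) (x : R) :
  continuous f x -> continuous g x -> continuous (fun y => f y - g y) x.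
Proof. exact (@continuous_minus R_UniformSpace R_AbsRing R_NormedModule f g x). Qed.

Lemma continuous_R_mult (f g : R -> R) (x : R) :
  continuous f x -> continuous g x -> continuous (fun y => f y * g y) x.
Proof. exact (@continuous_mult R_UniformSpace R_AbsRing f g x). Qed.

Lemma is_derive_ext_val (f g : R -> R) (x l l' : R) :
  (forall y, f y = g y) -> l = l' -> is_derive f x l -> is_derive g x l'.
Proof. intros Efg <- Hf. exact (is_derive_ext f g x l Efg Hf). Qed.

Lemma at_right_0_iff (P : R -> Prop) :
  at_right 0 P <-> exists d, 0 < d /\ forall y, 0 < y < d -> P y.
Proof.
  split.
  - intros [d H]. exists d. split; [apply cond_pos|]. intros y Hy. apply H; [|lra].
    change (Rabs (y - 0) < d). rewrite Rminus_0_r, Rabs_pos_eq; lra.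
  - intros [d [Hd H]]. exists (mkposreal d Hd). intros y By Hy. apply H. split; [exact Hy|].
    change (Rabs (y - 0) < d) in By. apply Rabs_def2 in By. lra.
Qed.

Lemma at_left_1_iff (P : R -> Prop) :
  at_left 1 P <-> exists d, 0 < d /\ forall y, 1 - d < y < 1 -> P y.
Proof.
  split.
  - intros [d H]. exists d. split; [apply cond_pos|]. intros y Hy. apply H; [|lra].
    change (Rabs (y - 1) < d). apply Rabs_def1; lra.
  - intros [d [Hd H]]. exists (mkposreal d Hd). intros y By Hy. apply H. split; [|exact Hy].
    change (Rabs (y - 1) < d) in By. apply Rabs_def2 in By. lra.
Qed.

Lemma at_right_0_open01 : at_right 0 (fun y => 0 < y < 1).
Proof. apply at_right_0_iff. exists 1. split; [lra | auto]. Qed.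

Lemma at_left_1_open01 : at_left 1 (fun y => 0 < y < 1).
Proof. apply at_left_1_iff. exists 1. split; [lra | intros; lra]. Qed.

Lemma filter_prod_open01 :
  filter_prod (at_right 0) (at_left 1) (fun ab => 0 < fst ab < 1/2 /\ 1/2 < snd ab < 1).
Proof.
  apply (Filter_prod _ _ _ (fun a => 0 < a < 1/2) (fun b => 1/2 < b < 1)); [| | now split].
  - apply at_right_0_iff. exists (1/2). split; [lra | auto].
  - apply at_left_1_iff. exists (1/2). split; [lra | intros; lra].
Qed.

Lemma filterlim_one_minus_at_right_0 : filterlim (fun s => 1 - s) (at_right 0) (at_left 1).
Proof.
  intros P HP. apply at_left_1_iff in HP as [d [Hd HP]].
  apply at_right_0_iff. exists d. split; [exact Hd|]. intros y Hy. apply HP. lra.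
Qed.

Lemma nondecr_lim_at_left_1 (P : R -> R) (K : R) :
  (forall x y, 0 < x <= y -> y < 1 -> P x <= P y) -> (forall x, 0 < x < 1 -> P x <= K) ->
  exists L, filterlim P (at_left 1) (locally L).
Proof.
  intros Hmono Hbnd.
  set (E := fun z => exists y, 0 < y < 1 /\ z = P y).
  destruct (completeness E) as [m [Hub Hlub]].
  { exists K. intros z [y [Hy ->]]. now apply Hbnd. }
  { exists (P (1/2)), (1/2). split; [lra | reflexivity]. }
  exists m. apply filterlim_locally. intros eps.
  assert (Hclose : exists y0, 0 < y0 < 1 /\ m - eps < P y0).
  { apply not_all_not_ex. intros Hfar.
    enough (m <= m - eps) by (pose proof (cond_pos eps); lra).
    apply Hlub. intros z [y [Hy ->]]. apply Rnot_lt_le. intros Hlt. apply (Hfar y). now split. }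
  destruct Hclose as [y0 [Hy0 Hlt]].
  apply at_left_1_iff. exists (1 - y0). split; [lra|]. intros y Hy.
  assert (P y <= m) by (apply Hub; exists y; split; [lra | reflexivity]).
  assert (P y0 <= P y) by (apply Hmono; lra).
  change (Rabs (P y - m) < eps). apply Rabs_def1; pose proof (cond_pos eps); lra.
Qed.

Lemma nondecr_lim_at_right_0 (P : R -> R) (K : R) :
  (forall x y, 0 < x <= y -> y < 1 -> P x <= P y) -> (forall x, 0 < x < 1 -> K <= P x) ->
  exists L, filterlim P (at_right 0) (locally L).
Proof.
  intros Hmono Hbnd.
  destruct (nondecr_lim_at_left_1 (fun s => - P (1 - s)) (- K)) as [L HL].
  - intros x y Hx Hy. apply Ropp_le_contravar, Hmono; lra.
  - intros x Hx. apply Ropp_le_contravar, Hbnd. lra.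
  - exists (-1 * L).
    apply (filterlim_ext (fun s => -1 * - P (1 - (1 - s)))); [intros s; cbv beta; replace (1 - (1 - s)) with s by ring; ring|].
    apply filterlim_R_scal.
    exact (filterlim_comp _ _ _ _ _ _ _ _ filterlim_one_minus_at_right_0 HL).
Qed.

Lemma open01_of_Rmin_Rmax (a b t : R) : 0 < a < 1 -> 0 < b < 1 ->
  Rmin a b <= t <= Rmax a b -> 0 < t < 1.
Proof.
  intros Ha Hb Ht. split.
  - eapply Rlt_le_trans; [|apply Ht]. now apply Rmin_glb_lt.
  - eapply Rle_lt_trans; [apply Ht|]. now apply Rmax_lub_lt.
Qed.

Lemma is_RInt_gen_open01_prim (g Pr : R -> R) (L0 L1 : R) :
  (forall a b, 0 < a < 1 -> 0 < b < 1 -> is_RInt g a b (Pr b - Pr a)) ->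
  filterlim Pr (at_right 0) (locally L0) -> filterlim Pr (at_left 1) (locally L1) ->
  is_RInt_gen g (at_right 0) (at_left 1) (L1 - L0).
Proof.
  intros Hprim H0 H1.
  apply (filterlimi_lim_ext_loc (fun ab => Pr (snd ab) - Pr (fst ab))).
  - eapply filter_imp; [|exact filter_prod_open01]. intros [a b] Hab; simpl in *.
    apply Hprim; lra.
  - apply filterlim_R_minus.
    + eapply filterlim_comp; [apply filterlim_snd | exact H1].
    + eapply filterlim_comp; [apply filterlim_fst | exact H0].
Qed.

Lemma RInt_open01_lim (g : R -> R) (I : R) :
  is_RInt_gen g (at_right 0) (at_left 1) I ->
  filterlim (fun ab => RInt g (fst ab) (snd ab)) (filter_prod (at_right 0) (at_left 1)) (locally I).
Proof.
  intros HI. apply filterlim_locally. intros eps.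
  pose proof (proj1 (filterlimi_locally _ I) HI eps) as Hev.
  eapply filter_imp; [|exact (filter_and _ _ filter_prod_open01 Hev)].
  intros [a b] [Hab [y [Hy Hball]]]; simpl in *.
  replace (RInt g a b) with y; [exact Hball|].
  symmetry. apply (@is_RInt_unique R_CompleteNormedModule). exact Hy.
Qed.

Section OpenUnitInterval.

Variable g : R -> R.
Hypothesis g_cont : forall t, 0 < t < 1 -> continuous g t.

Lemma ex_RInt_open01 (a b : R) : 0 < a < 1 -> 0 < b < 1 -> ex_RInt g a b.
Proof.
  intros Ha Hb. apply (ex_RInt_continuous (V := R_CompleteNormedModule)). intros t Ht.
  now apply g_cont, (open01_of_Rmin_Rmax a b).
Qed.

Lemma is_RInt_open01 (a b : R) : 0 < a < 1 -> 0 < b < 1 -> is_RInt g a b (RInt g a b).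
Proof. intros Ha Hb. apply (@RInt_correct R_CompleteNormedModule), ex_RInt_open01; assumption. Qed.

Lemma RInt_open01_Chasles (a b : R) : 0 < a < 1 -> 0 < b < 1 ->
  RInt g a b = RInt g (1/2) b - RInt g (1/2) a.
Proof.
  intros Ha Hb.
  assert (E : RInt g (1/2) a + RInt g a b = RInt g (1/2) b)
    by (apply (@RInt_Chasles R_CompleteNormedModule); apply ex_RInt_open01; lra).
  lra.
Qed.

Lemma is_RInt_gen_open01_pos (t0 I : R) :
  (forall t, 0 < t < 1 -> 0 <= g t) -> 0 < t0 < 1 -> 0 < g t0 ->
  is_RInt_gen g (at_right 0) (at_left 1) I -> 0 < I.
Proof.
  intros Hnn Ht0 Hg0 HI.
  assert (Hhalf : 0 < g t0 / 2) by lra.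
  destruct (proj1 (filterlim_locally g (g t0)) (g_cont t0 Ht0) (mkposreal _ Hhalf)) as [d Hd].
  pose proof (cond_pos d) as Hd0.
  set (r := Rmin (d / 2) (Rmin (t0 / 2) ((1 - t0) / 2))).
  assert (Hr : 0 < r /\ r <= d / 2 /\ r <= t0 / 2 /\ r <= (1 - t0) / 2).
  { unfold r. repeat split.
    - repeat apply Rmin_glb_lt; lra.
    - apply Rmin_l.
    - eapply Rle_trans; [apply Rmin_r | apply Rmin_l].
    - eapply Rle_trans; [apply Rmin_r | apply Rmin_r]. }
  set (c := RInt g (t0 - r) (t0 + r)).
  assert (Hc : 0 < c).
  { apply RInt_gt_0; [lra | | intros t Ht; apply g_cont; lra].
    intros t Ht. assert (Hball : ball t0 d t) by (change (Rabs (t - t0) < d); apply Rabs_def1; lra).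
    specialize (Hd t Hball). change (Rabs (g t - g t0) < g t0 / 2) in Hd.
    apply Rabs_def2 in Hd. lra. }
  enough (c <= I) by lra.
  refine (filterlim_le (fun _ => c) (fun ab => RInt g (fst ab) (snd ab)) c I _
            (filterlim_const c) (RInt_open01_lim g I HI)).
  apply (Filter_prod _ _ _ (fun a => 0 < a < t0 - r) (fun b => t0 + r < b < 1)).
  - apply at_right_0_iff. exists (t0 - r). split; [lra | auto].
  - apply at_left_1_iff. exists (1 - (t0 + r)). split; [lra | intros; lra].
  - intros a b Ha Hb; simpl.
    assert (0 <= RInt g a (t0 - r)).
    { apply RInt_ge_0; [lra | apply ex_RInt_open01; lra | intros; apply Hnn; lra]. }
    assert (0 <= RInt g (t0 + r) b).
    { apply RInt_ge_0; [lra | apply ex_RInt_open01; lra | intros; apply Hnn; lra]. }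
    unfold c. rewrite (RInt_open01_Chasles a b), (RInt_open01_Chasles a (t0 - r)),
      (RInt_open01_Chasles (t0 - r) (t0 + r)), (RInt_open01_Chasles (t0 + r) b) in * by lra.
    lra.
Qed.

Lemma ex_RInt_gen_open01_bounded (K : R) :
  (forall t, 0 < t < 1 -> 0 <= g t) -> (forall a b, 0 < a <= b -> b < 1 -> RInt g a b <= K) ->
  ex_RInt_gen g (at_right 0) (at_left 1).
Proof.
  intros Hnn HK.
  set (P := fun y => RInt g (1/2) y).
  assert (Hdiff : forall x y, 0 < x <= y -> y < 1 -> P y - P x = RInt g x y).
  { intros x y Hx Hy. unfold P. rewrite (RInt_open01_Chasles x y); lra. }
  assert (Hmono : forall x y, 0 < x <= y -> y < 1 -> P x <= P y).
  { intros x y Hx Hy. enough (0 <= P y - P x) by lra. rewrite Hdiff by lra.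
    apply RInt_ge_0; [lra | apply ex_RInt_open01; lra | intros; apply Hnn; lra]. }
  assert (Hhalf : P (1/2) = 0) by apply (@RInt_point R_CompleteNormedModule).
  destruct (nondecr_lim_at_right_0 P (- K)) as [L0 H0]; [exact Hmono | |].
  { intros x Hx. destruct (Rle_lt_dec x (1/2)).
    - specialize (Hdiff x (1/2)). specialize (HK x (1/2)). lra.
    - specialize (Hdiff (1/2) x). specialize (HK (1/2) x). specialize (Hmono (1/2) x). lra. }
  destruct (nondecr_lim_at_left_1 P K) as [L1 H1]; [exact Hmono | |].
  { intros x Hx. destruct (Rle_lt_dec x (1/2)).
    - specialize (Hdiff x (1/2)). specialize (HK x (1/2)). specialize (Hmono x (1/2)). lra.
    - specialize (Hdiff (1/2) x). specialize (HK (1/2) x). lra. }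
  exists (L1 - L0). apply (is_RInt_gen_open01_prim g P); [|exact H0 | exact H1].
  intros a b Ha Hb. unfold P. rewrite <- RInt_open01_Chasles by assumption.
  now apply is_RInt_open01.
Qed.

End OpenUnitInterval.

(** * Termwise limits and integrals of series *)

Lemma Series_tail_abs_le (e c : nat -> R) (B : R) (N : nat) :
  ex_series (fun k => Rabs (e k)) -> (forall k, Rabs (c k) <= B) ->
  Rabs (Series (fun k => e k * c k) - sum_f_R0 (fun k => e k * c k) N)
    <= B * (Series (fun k => Rabs (e k)) - sum_f_R0 (fun k => Rabs (e k)) N).
Proof.
  intros He Hc.
  assert (Hdom : forall k, Rabs (e k * c k) <= B * Rabs (e k)).
  { intros k. rewrite Rabs_mult, Rmult_comm. apply Rmult_le_compat_r; [apply Rabs_pos | apply Hc]. }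
  assert (HeB : ex_series (fun k => B * Rabs (e k))) by now apply (ex_series_scal_l (V := R_NormedModule)).
  assert (Hec : ex_series (fun k => Rabs (e k * c k))).
  { apply (ex_series_le (V := R_CompleteNormedModule)) with (2 := HeB). intros k.
    change (Rabs (Rabs (e k * c k)) <= B * Rabs (e k)). rewrite Rabs_Rabsolu. apply Hdom. }
  rewrite (Series_incr_n (fun k => e k * c k) (S N)) by (lia || now apply ex_series_Rabs).
  rewrite (Series_incr_n (fun k => Rabs (e k)) (S N)) by (lia || exact He).
  simpl Init.Nat.pred.
  match goal with |- Rabs (?s + ?t - ?s) <= B * (?s' + ?t' - ?s') =>
    replace (s + t - s) with t by ring; replace (s' + t' - s') with t' by ring end.
  eapply Rle_trans; [apply Series_Rabs; now apply (ex_series_incr_n (fun k => Rabs (e k * c k)))|].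
  rewrite <- Series_scal_l. apply Series_le; [intros k; split; [apply Rabs_pos | apply Hdom]|].
  now apply (ex_series_incr_n (fun k => B * Rabs (e k))).
Qed.

Lemma is_lim_seq_Series_tail (e : nat -> R) : ex_series e ->
  is_lim_seq (fun N => Series e - sum_f_R0 e N) 0.
Proof.
  intros He. replace (Finite 0) with (Finite (Series e - Series e)) by (f_equal; ring).
  apply is_lim_seq_minus'; [apply is_lim_seq_const|].
  apply (is_lim_seq_ext (sum_n e)); [intros; apply sum_n_Reals | apply Series_correct, He].
Qed.

Lemma filterlim_sum_f_R0 {T : Type} {F : (T -> Prop) -> Prop} {FF : Filter F}
  (phi : nat -> T -> R) (l : nat -> R) (N : nat) :
  (forall k, filterlim (phi k) F (locally (l k))) ->
  filterlim (fun x => sum_f_R0 (fun k => phi k x) N) F (locally (sum_f_R0 l N)).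
Proof.
  intros Hl. induction N as [|N IH]; simpl; [apply Hl|]. now apply filterlim_R_plus.
Qed.

Lemma filterlim_Rabs_le {T : Type} {F : (T -> Prop) -> Prop} {FF : ProperFilter F}
  (f : T -> R) (l B : R) :
  filterlim f F (locally l) -> F (fun x => Rabs (f x) <= B) -> Rabs l <= B.
Proof.
  intros Hf HB. apply Rabs_le_between. split.
  - refine (filterlim_le (fun _ => - B) f (- B) l _ (filterlim_const _) Hf).
    eapply filter_imp; [|exact HB]. intros x Hx. now apply Rabs_le_between in Hx.
  - refine (filterlim_le f (fun _ => B) l B _ Hf (filterlim_const _)).
    eapply filter_imp; [|exact HB]. intros x Hx. now apply Rabs_le_between in Hx.
Qed.

Lemma tannery {T : Type} {F : (T -> Prop) -> Prop} {FF : ProperFilter F}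
  (e : nat -> R) (phi : nat -> T -> R) (l : nat -> R) (B : R) :
  ex_series (fun k => Rabs (e k)) ->
  (forall k, filterlim (phi k) F (locally (l k))) ->
  F (fun x => forall k, Rabs (phi k x) <= B) ->
  filterlim (fun x => Series (fun k => e k * phi k x)) F (locally (Series (fun k => e k * l k))).
Proof.
  intros He Hl HB.
  assert (Hl_le : forall k, Rabs (l k) <= B).
  { intros k. apply (filterlim_Rabs_le (phi k) (l k) B (Hl k)).
    eapply filter_imp; [|exact HB]. now intros x Hx. }
  assert (HB0 : 0 <= B) by (pose proof (Hl_le 0%nat); pose proof (Rabs_pos (l 0%nat)); lra).
  apply filterlim_locally. intros eps. pose proof (cond_pos eps) as Heps.
  set (tail N := Series (fun k => Rabs (e k)) - sum_f_R0 (fun k => Rabs (e k)) N).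
  assert (Hd : 0 < eps / (4 * (B + 1))) by (apply Rdiv_lt_0_compat; lra).
  destruct (proj1 (filterlim_locally _ _) (is_lim_seq_Series_tail _ He) (mkposreal _ Hd)) as [N HN].
  specialize (HN N (le_n N)). change (Rabs (tail N - 0) < eps / (4 * (B + 1))) in HN.
  rewrite Rminus_0_r in HN.
  assert (HBtail : B * tail N <= eps / 4).
  { apply Rle_trans with ((B + 1) * (eps / (4 * (B + 1)))); [|right; field; lra].
    apply Rle_trans with (B * Rabs (tail N)); [apply Rmult_le_compat_l; [lra | apply Rle_abs]|].
    pose proof (Rabs_pos (tail N)). apply Rmult_le_compat; lra. }
  pose proof (filterlim_sum_f_R0 (fun k x => e k * phi k x) (fun k => e k * l k) N
                (fun k => filterlim_R_scal (e k) (phi k) (l k) (Hl k))) as Hfinite.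
  assert (He2 : 0 < eps / 2) by lra.
  pose proof (proj1 (filterlim_locally _ _) Hfinite (mkposreal _ He2)) as Hclose.
  eapply filter_imp; [|exact (filter_and _ _ HB Hclose)]. intros x [Hx Hxc].
  change (Rabs (sum_f_R0 (fun k => e k * phi k x) N - sum_f_R0 (fun k => e k * l k) N) < eps / 2)
    in Hxc.
  pose proof (Series_tail_abs_le e (fun k => phi k x) B N He Hx) as T1.
  pose proof (Series_tail_abs_le e l B N He Hl_le) as T2.
  change (Rabs (Series (fun k => e k * phi k x) - Series (fun k => e k * l k)) < eps).
  match goal with |- Rabs (?A - ?D) < _ =>
    replace (A - D) with ((A - sum_f_R0 (fun k => e k * phi k x) N)
        + (sum_f_R0 (fun k => e k * phi k x) N - sum_f_R0 (fun k => e k * l k) N)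
        - (D - sum_f_R0 (fun k => e k * l k) N)) by ring end.
  eapply Rle_lt_trans; [apply Rabs_triang|]. rewrite Rabs_Ropp.
  eapply Rle_lt_trans; [apply Rplus_le_compat_r, Rabs_triang|]. fold (tail N) in T1, T2. lra.
Qed.

Lemma is_RInt_sum_f_R0 (e : nat -> R) (g : nat -> R -> R) (a b : R) (N : nat) :
  (forall k, ex_RInt (g k) a b) ->
  is_RInt (fun t => sum_f_R0 (fun k => e k * g k t) N) a b
    (sum_f_R0 (fun k => e k * RInt (g k) a b) N).
Proof.
  intros Hg.
  assert (Hterm : forall k, is_RInt (fun t => e k * g k t) a b (e k * RInt (g k) a b)).
  { intros k. apply (is_RInt_scal (V := R_NormedModule)), (RInt_correct (V := R_CompleteNormedModule)), Hg. }
  induction N as [|N IH]; simpl; [apply Hterm|].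
  apply (is_RInt_plus (V := R_NormedModule)); [exact IH | apply Hterm].
Qed.

Lemma is_series_RInt (e : nat -> R) (g : nat -> R -> R) (wb : R -> R) (a b : R) :
  a <= b -> ex_series (fun k => Rabs (e k)) ->
  (forall k, ex_RInt (g k) a b) -> ex_RInt wb a b ->
  ex_RInt (fun t => Series (fun k => e k * g k t)) a b ->
  (forall k t, a <= t <= b -> Rabs (g k t) <= wb t) ->
  is_series (fun k => e k * RInt (g k) a b) (RInt (fun t => Series (fun k => e k * g k t)) a b).
Proof.
  intros Hab He Hg Hwb Hs Hdom.
  set (S := RInt (fun t => Series (fun k => e k * g k t)) a b).
  set (W := RInt wb a b).
  set (tail N := Series (fun k => Rabs (e k)) - sum_f_R0 (fun k => Rabs (e k)) N).
  assert (Hpart : forall N, Rabs (S - sum_f_R0 (fun k => e k * RInt (g k) a b) N) <= tail N * W).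
  { intros N.
    refine (norm_RInt_le (fun t => Series (fun k => e k * g k t) - sum_f_R0 (fun k => e k * g k t) N)
              (fun t => tail N * wb t) a b _ _ Hab _ _ _).
    - intros t Ht. rewrite Rmult_comm. apply Series_tail_abs_le; [exact He|]. intros k. now apply Hdom.
    - apply (is_RInt_minus (V := R_NormedModule)); [now apply (RInt_correct (V := R_CompleteNormedModule))|].
      now apply is_RInt_sum_f_R0.
    - now apply (is_RInt_scal (V := R_NormedModule)), (RInt_correct (V := R_CompleteNormedModule)). }
  assert (Htail : is_lim_seq (fun N => tail N * W) 0).
  { replace (Finite 0) with (Rbar_mult 0 W) by (simpl; f_equal; ring).
    apply is_lim_seq_scal_r, is_lim_seq_Series_tail, He. }
  enough (H : is_lim_seq (sum_n (fun k => e k * RInt (g k) a b)) S) by exact H.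
  apply (is_lim_seq_le_le (fun N => S - tail N * W) _ (fun N => S + tail N * W)).
  - intros N. rewrite sum_n_Reals. specialize (Hpart N). apply Rabs_le_between in Hpart. lra.
  - replace (Finite S) with (Finite (S - 0)) by (f_equal; ring).
    apply is_lim_seq_minus'; [apply is_lim_seq_const | exact Htail].
  - replace (Finite S) with (Finite (S + 0)) by (f_equal; ring).
    apply is_lim_seq_plus'; [apply is_lim_seq_const | exact Htail].
Qed.

Lemma is_RInt_gen_open01_series (e : nat -> R) (g : nat -> R -> R) (h wb : R -> R)
  (l : nat -> R) (K : R) :
  ex_series (fun k => Rabs (e k)) ->
  (forall k t, 0 < t < 1 -> continuous (g k) t) ->
  (forall t, 0 < t < 1 -> continuous wb t) ->
  (forall t, 0 < t < 1 -> continuous h t) ->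
  (forall t, 0 < t < 1 -> h t = Series (fun k => e k * g k t)) ->
  (forall k t, 0 < t < 1 -> Rabs (g k t) <= wb t) ->
  (forall a b, 0 < a <= b -> b < 1 -> RInt wb a b <= K) ->
  (forall k, is_RInt_gen (g k) (at_right 0) (at_left 1) (l k)) ->
  is_RInt_gen h (at_right 0) (at_left 1) (Series (fun k => e k * l k)).
Proof.
  intros He Hg Hwb Hh Hser Hdom HK Hl.
  apply (filterlimi_lim_ext_loc (fun ab => Series (fun k => e k * RInt (g k) (fst ab) (snd ab)))).
  - eapply filter_imp; [|exact filter_prod_open01]. intros [a b] Hab; simpl in *.
    assert (Hin : forall t, Rmin a b < t < Rmax a b -> 0 < t < 1).
    { intros t Ht. apply (open01_of_Rmin_Rmax a b); lra. }
    replace (Series _) with (RInt h a b); [apply is_RInt_open01; [exact Hh | lra | lra]|].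
    symmetry. apply is_series_unique.
    rewrite (RInt_ext h (fun t => Series (fun k => e k * g k t))) by (intros t Ht; apply Hser, Hin, Ht).
    apply is_series_RInt with (wb := wb); try lra; try assumption.
    + intros k. apply ex_RInt_open01; [apply Hg | lra | lra].
    + apply ex_RInt_open01; [exact Hwb | lra | lra].
    + apply (ex_RInt_ext h); [intros t Ht; apply Hser, Hin, Ht|].
      apply ex_RInt_open01; [exact Hh | lra | lra].
    + intros k t Ht. apply Hdom. lra.
  - apply tannery with (B := K); [exact He | intros k; now apply RInt_open01_lim |].
    eapply filter_imp; [|exact filter_prod_open01]. intros [a b] Hab k; simpl in *.
    eapply Rle_trans; [apply abs_RInt_le; [lra | apply ex_RInt_open01; [apply Hg | lra | lra]]|].
    apply Rle_trans with (RInt wb a b); [|apply HK; lra].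
    apply RInt_le; [lra | | apply ex_RInt_open01; [exact Hwb | lra | lra] |].
    + apply (ex_RInt_continuous (V := R_CompleteNormedModule)). intros t Ht.
      apply continuous_comp; [|apply continuous_Rabs].
      apply Hg, (open01_of_Rmin_Rmax a b); [lra | lra | exact Ht].
    + intros t Ht. apply Hdom. lra.
Qed.

(** * The weight t^(2r-1) (1-t^2)^(q-1) *)

Lemma Rpower_pos (x e : R) : 0 < Rpower x e.
Proof. apply exp_pos. Qed.

Lemma Rpower_1_base (e : R) : Rpower 1 e = 1.
Proof. unfold Rpower. now rewrite ln_1, Rmult_0_r, exp_0. Qed.

Lemma Rpower_le_1 (y e : R) : 0 < y <= 1 -> 0 <= e -> Rpower y e <= 1.
Proof. intros Hy He. rewrite <- (Rpower_1_base e). now apply Rle_Rpower_l. Qed.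

Lemma Rpower_le_1_plus (c y e : R) : 0 < c <= y -> y <= 1 -> Rpower y e <= 1 + Rpower c e.
Proof.
  intros Hcy Hy1. pose proof (Rpower_pos c e).
  destruct (Rle_lt_dec 0 e) as [He | He]; [pose proof (Rpower_le_1 y e); lra|].
  enough (Rpower y e <= Rpower c e) by lra.
  assert (ln c <= ln y) by (apply ln_le; lra).
  assert (Hexp : e * ln y <= e * ln c) by nra. unfold Rpower.
  destruct Hexp as [Hlt | ->]; [left; now apply exp_increasing | right; reflexivity].
Qed.

Lemma Rpower_lim_0 (e : R) : 0 < e -> filterlim (fun t => Rpower t e) (at_right 0) (locally 0).
Proof.
  intros He. apply filterlim_locally. intros eps. apply at_right_0_iff.
  exists (Rpower eps (/ e)). split; [apply Rpower_pos|]. intros y Hy.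
  change (Rabs (Rpower y e - 0) < eps). rewrite Rminus_0_r, Rabs_pos_eq by apply Rlt_le, Rpower_pos.
  replace (pos eps) with (Rpower (Rpower eps (/ e)) e)
    by (rewrite Rpower_mult, Rinv_l, Rpower_1 by (apply cond_pos || lra); reflexivity).
  apply Rlt_Rpower_l; lra.
Qed.

Lemma is_derive_Rpower (e x : R) : 0 < x -> is_derive (fun t => Rpower t e) x (e * Rpower x (e - 1)).
Proof. intros Hx. apply is_derive_Reals, derivable_pt_lim_power, Hx. Qed.

Lemma continuous_Rpower (e x : R) : 0 < x -> continuous (fun t => Rpower t e) x.
Proof. intros Hx. apply (ex_derive_continuous (V := R_NormedModule)). eexists. now apply is_derive_Rpower. Qed.

Lemma Rpower_plus_1 (x e : R) : 0 < x -> Rpower x (e + 1) = Rpower x e * x.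
Proof. intros Hx. now rewrite Rpower_plus, Rpower_1. Qed.

Lemma is_derive_Rpower_comp (f : R -> R) (df e x : R) : 0 < f x -> is_derive f x df ->
  is_derive (fun t => Rpower (f t) e) x (df * (e * Rpower (f x) (e - 1))).
Proof. intros Hf Hd. apply (is_derive_comp (fun t => Rpower t e) f); [now apply is_derive_Rpower | exact Hd]. Qed.

Lemma filterlim_one_minus_sq_at_left_1 : filterlim (fun t => 1 - t ^ 2) (at_left 1) (at_right 0).
Proof.
  intros P HP. apply at_right_0_iff in HP as [d [Hd HP]].
  apply at_left_1_iff. exists (Rmin (d / 2) 1). split; [apply Rmin_glb_lt; lra|].
  intros y Hy. pose proof (Rmin_l (d / 2) 1). pose proof (Rmin_r (d / 2) 1). apply HP. nra.
Qed.

Lemma filterlim_sqrt_one_minus_at_right_0 : filterlim (fun s => sqrt (1 - s)) (at_right 0) (at_left 1).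
Proof.
  intros P HP. apply at_left_1_iff in HP as [d [Hd HP]].
  apply at_right_0_iff. exists (Rmin d 1). split; [apply Rmin_glb_lt; lra|].
  intros s Hs. pose proof (Rmin_l d 1). pose proof (Rmin_r d 1). apply HP. split.
  - pose proof (sqrt_pos (1 - s)). pose proof (sqrt_sqrt (1 - s) ltac:(lra)).
    assert (sqrt (1 - s) <= 1) by (rewrite <- sqrt_1 at 2; apply sqrt_le_1_alt; lra).
    nra.
  - rewrite <- sqrt_1 at 2. apply sqrt_lt_1; lra.
Qed.

Lemma filterlim_sqrt_one_minus_at_left_1 : filterlim (fun s => sqrt (1 - s)) (at_left 1) (at_right 0).
Proof.
  intros P HP. apply at_right_0_iff in HP as [d [Hd HP]].
  apply at_left_1_iff. exists (Rmin (d * d) 1). split; [apply Rmin_glb_lt; nra|].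
  intros s Hs. pose proof (Rmin_l (d * d) 1). apply HP. split.
  - apply sqrt_lt_R0. lra.
  - rewrite <- (sqrt_square d) by lra. apply sqrt_lt_1; lra.
Qed.

Definition beta_weight (r q t : R) : R := Rpower t (2 * r - 1) * Rpower (1 - t ^ 2) (q - 1).

Definition beta_mass (r q : R) : R := RInt_gen (beta_weight r q) (at_right 0) (at_left 1).

Lemma beta_weight_pos (r q t : R) : 0 < beta_weight r q t.
Proof. apply Rmult_lt_0_compat; apply Rpower_pos. Qed.

Lemma is_derive_one_minus_sq (t : R) : is_derive (fun t => 1 - t ^ 2) t (- (2 * t)).
Proof. auto_derive; [exact I | ring]. Qed.

Lemma one_minus_sq_pos (t : R) : 0 < t < 1 -> 0 < 1 - t ^ 2.
Proof. intros Ht. nra. Qed.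

Lemma continuous_beta_weight (r q t : R) : 0 < t < 1 -> continuous (beta_weight r q) t.
Proof.
  intros Ht. apply (ex_derive_continuous (V := R_NormedModule)), ex_derive_mult.
  - eexists. apply is_derive_Rpower. lra.
  - eexists. apply (is_derive_Rpower_comp (fun t => 1 - t ^ 2)); [now apply one_minus_sq_pos | apply is_derive_one_minus_sq].
Qed.

Lemma beta_weight_shift (r q t : R) (k : nat) : 0 < t ->
  (t ^ 2) ^ k * beta_weight r q t = beta_weight (r + INR k) q t.
Proof.
  intros Ht. unfold beta_weight.
  replace (2 * (r + INR k) - 1) with ((2 * r - 1) + INR (2 * k)) by (rewrite mult_INR; simpl; ring).
  rewrite Rpower_plus, Rpower_pow, pow_mult by exact Ht. ring.
Qed.

Lemma beta_weight_shift_le (r q t : R) (k : nat) : 0 < t < 1 ->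
  beta_weight (r + INR k) q t <= beta_weight r q t.
Proof.
  intros Ht. rewrite <- beta_weight_shift by lra. pose proof (beta_weight_pos r q t).
  assert ((t ^ 2) ^ k <= 1) by (rewrite <- (pow1 k); apply pow_incr; nra).
  nra.
Qed.

Lemma beta_weight_le (r q t : R) : 0 < t < 1 ->
  beta_weight r q t <= (1 + Rpower (3/4) (q - 1)) * Rpower t (2 * r - 1)
                       + (1 + Rpower (1/2) (2 * r - 2)) * (t * Rpower (1 - t ^ 2) (q - 1)).
Proof.
  intros Ht. unfold beta_weight.
  pose proof (Rpower_pos t (2 * r - 1)). pose proof (Rpower_pos (1 - t ^ 2) (q - 1)).
  pose proof (Rpower_pos (3/4) (q - 1)). pose proof (Rpower_pos (1/2) (2 * r - 2)).
  destruct (Rle_lt_dec t (1/2)) as [Hsmall | Hlarge].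
  - assert (Rpower (1 - t ^ 2) (q - 1) <= 1 + Rpower (3/4) (q - 1))
      by (apply Rpower_le_1_plus; nra).
    assert (0 <= (1 + Rpower (1/2) (2 * r - 2)) * (t * Rpower (1 - t ^ 2) (q - 1)))
      by (apply Rmult_le_pos; [lra | apply Rmult_le_pos; lra]).
    rewrite (Rmult_comm (1 + _) (Rpower t _)).
    enough (Rpower t (2 * r - 1) * Rpower (1 - t ^ 2) (q - 1)
              <= Rpower t (2 * r - 1) * (1 + Rpower (3/4) (q - 1))) by lra.
    apply Rmult_le_compat_l; lra.
  - replace (Rpower t (2 * r - 1)) with (Rpower t (2 * r - 2) * t) at 1
      by (rewrite <- Rpower_plus_1 by lra; f_equal; ring).
    assert (Rpower t (2 * r - 2) <= 1 + Rpower (1/2) (2 * r - 2)) by (apply Rpower_le_1_plus; lra).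
    assert (0 <= (1 + Rpower (3/4) (q - 1)) * Rpower t (2 * r - 1)) by (apply Rmult_le_pos; lra).
    rewrite Rmult_assoc.
    enough (Rpower t (2 * r - 2) * (t * Rpower (1 - t ^ 2) (q - 1))
              <= (1 + Rpower (1/2) (2 * r - 2)) * (t * Rpower (1 - t ^ 2) (q - 1))) by lra.
    apply Rmult_le_compat_r; [apply Rmult_le_pos|]; lra.
Qed.

Lemma is_RInt_beta_majorant (K1 K2 r q a b : R) : 0 < r -> 0 < q -> 0 < a < 1 -> 0 < b < 1 ->
  let H t := K1 * Rpower t (2 * r) / (2 * r) - K2 * Rpower (1 - t ^ 2) q / (2 * q) in
  is_RInt (fun t => K1 * Rpower t (2 * r - 1) + K2 * (t * Rpower (1 - t ^ 2) (q - 1))) a b (H b - H a).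
Proof.
  intros Hr Hq Ha Hb H.
  apply (is_RInt_derive (V := R_CompleteNormedModule) H); intros t Ht;
    apply (open01_of_Rmin_Rmax a b) in Ht; [| lra | lra | | lra | lra].
  - pose proof (is_derive_Rpower (2 * r) t ltac:(lra)) as D1.
    pose proof (is_derive_Rpower_comp _ _ q t (one_minus_sq_pos t Ht) (is_derive_one_minus_sq t)) as D2.
    refine (is_derive_ext_val _ _ _ _ _ _ _ (is_derive_minus _ _ t _ _
              (is_derive_scal _ t (K1 / (2 * r)) _ D1) (is_derive_scal _ t (K2 / (2 * q)) _ D2)));
      unfold H, minus, plus, opp, scal; simpl; unfold mult; simpl; [intros y|]; field; lra.
  - apply continuous_R_plus; apply continuous_R_mult; try apply continuous_const.
    + now apply continuous_Rpower.
    + apply continuous_R_mult; [apply continuous_id|].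
      apply (continuous_comp (fun t => 1 - t ^ 2) (fun s => Rpower s (q - 1)));
        [|now apply continuous_Rpower, one_minus_sq_pos].
      apply (ex_derive_continuous (V := R_NormedModule)). eexists. apply is_derive_one_minus_sq.
Qed.

Lemma RInt_beta_weight_le (r q : R) : 0 < r -> 0 < q ->
  exists K, forall a b, 0 < a <= b -> b < 1 -> RInt (beta_weight r q) a b <= K.
Proof.
  intros Hr Hq.
  set (K1 := 1 + Rpower (3/4) (q - 1)). set (K2 := 1 + Rpower (1/2) (2 * r - 2)).
  assert (HK1 : 0 < K1) by (unfold K1; pose proof (Rpower_pos (3/4) (q - 1)); lra).
  assert (HK2 : 0 < K2) by (unfold K2; pose proof (Rpower_pos (1/2) (2 * r - 2)); lra).
  exists (K1 / (2 * r) + K2 / (2 * q)). intros a b Hab Hb.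
  pose proof (is_RInt_beta_majorant K1 K2 r q a b Hr Hq ltac:(lra) ltac:(lra)) as HI.
  cbv beta zeta in HI.
  assert (Hw : ex_RInt (beta_weight r q) a b)
    by (apply ex_RInt_open01; [apply continuous_beta_weight | lra | lra]).
  eapply Rle_trans; [apply RInt_le with (2 := Hw) (3 := ex_intro _ _ HI) |]; [lra | |].
  - intros t Ht. apply beta_weight_le. lra.
  - rewrite (is_RInt_unique _ a b _ HI).
    assert (Rpower b (2 * r) <= 1) by (apply Rpower_le_1; lra).
    assert (Rpower (1 - a ^ 2) q <= 1) by (apply Rpower_le_1; [nra | lra]).
    pose proof (Rpower_pos a (2 * r)). pose proof (Rpower_pos (1 - b ^ 2) q).
    unfold Rdiv. set (i := / (2 * r)). set (j := / (2 * q)).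
    assert (0 < K1 * i) by (apply Rmult_lt_0_compat; [lra | apply Rinv_0_lt_compat; lra]).
    assert (0 < K2 * j) by (apply Rmult_lt_0_compat; [lra | apply Rinv_0_lt_compat; lra]).
    nra.
Qed.

Lemma is_RInt_gen_beta_mass (r q : R) : 0 < r -> 0 < q ->
  is_RInt_gen (beta_weight r q) (at_right 0) (at_left 1) (beta_mass r q).
Proof.
  intros Hr Hq. destruct (RInt_beta_weight_le r q Hr Hq) as [K HK].
  apply (RInt_gen_correct (V := R_CompleteNormedModule)).
  apply (ex_RInt_gen_open01_bounded _ (continuous_beta_weight r q) K); [|exact HK].
  intros t _. apply Rlt_le, beta_weight_pos.
Qed.

Lemma beta_mass_pos (r q : R) : 0 < r -> 0 < q -> 0 < beta_mass r q.
Proof.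
  intros Hr Hq.
  apply (is_RInt_gen_open01_pos (beta_weight r q) (continuous_beta_weight r q) (1/2));
    [intros t _; apply Rlt_le, beta_weight_pos | lra | apply beta_weight_pos |].
  now apply is_RInt_gen_beta_mass.
Qed.

Definition beta_antideriv (r q t : R) : R := - (Rpower t (2 * r) * Rpower (1 - t ^ 2) q) / (2 * q).

Lemma is_derive_beta_antideriv (r q t : R) : 0 < q -> 0 < t < 1 ->
  is_derive (beta_antideriv r q) t
    (beta_weight (r + 1) q t - r / q * (beta_weight r q t - beta_weight (r + 1) q t)).
Proof.
  intros Hq Ht.
  pose proof (is_derive_Rpower (2 * r) t ltac:(lra)) as D1.
  pose proof (is_derive_Rpower_comp _ _ q t (one_minus_sq_pos t Ht) (is_derive_one_minus_sq t)) as D2.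
  refine (is_derive_ext_val _ _ _ _ _ _ _
            (is_derive_scal _ t (- / (2 * q)) _ (is_derive_mult _ _ t _ _ D1 D2 Rmult_comm)));
    [intros y; unfold beta_antideriv, scal, mult; simpl; unfold mult; simpl; field; lra|].
  unfold beta_weight; cbv beta.
  set (A := Rpower t (2 * r - 1)). set (B := Rpower (1 - t ^ 2) (q - 1)).
  replace (Rpower t (2 * (r + 1) - 1)) with (A * t * t)
    by (unfold A; rewrite <- !Rpower_plus_1 by lra; f_equal; ring).
  replace (Rpower t (2 * r)) with (A * t)
    by (unfold A; rewrite <- Rpower_plus_1 by lra; f_equal; ring).
  replace (Rpower (1 - t ^ 2) q) with (B * (1 - t ^ 2))
    by (unfold B; rewrite <- Rpower_plus_1 by (apply one_minus_sq_pos, Ht); f_equal; ring).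
  unfold scal, plus, mult; simpl; unfold mult; simpl.
  field. lra.
Qed.

Lemma beta_antideriv_bounds (r q t : R) : 0 < r -> 0 < q -> 0 < t < 1 ->
  - Rpower t (2 * r) / (2 * q) <= beta_antideriv r q t <= 0 /\
  - Rpower (1 - t ^ 2) q / (2 * q) <= beta_antideriv r q t.
Proof.
  intros Hr Hq Ht. unfold beta_antideriv.
  assert (Rpower t (2 * r) <= 1) by (apply Rpower_le_1; lra).
  assert (Rpower (1 - t ^ 2) q <= 1) by (apply Rpower_le_1; [nra | lra]).
  pose proof (Rpower_pos t (2 * r)). pose proof (Rpower_pos (1 - t ^ 2) q).
  assert (Hinv : 0 < / (2 * q)) by (apply Rinv_0_lt_compat; lra).
  assert (Rpower t (2 * r) * Rpower (1 - t ^ 2) q <= Rpower t (2 * r)) by nra.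
  assert (Rpower t (2 * r) * Rpower (1 - t ^ 2) q <= Rpower (1 - t ^ 2) q) by nra.
  assert (0 < Rpower t (2 * r) * Rpower (1 - t ^ 2) q) by nra.
  unfold Rdiv. repeat split; nra.
Qed.

Lemma beta_antideriv_lim_0 (r q : R) : 0 < r -> 0 < q ->
  filterlim (beta_antideriv r q) (at_right 0) (locally 0).
Proof.
  intros Hr Hq.
  apply (filterlim_le_le (fun t => - / (2 * q) * Rpower t (2 * r)) _ (fun _ => 0) (Finite 0)).
  - eapply filter_imp; [|exact at_right_0_open01]. intros t Ht.
    pose proof (beta_antideriv_bounds r q t Hr Hq Ht). unfold Rdiv in *. lra.
  - replace (Finite 0) with (Finite (- / (2 * q) * 0)) by (f_equal; ring).
    apply filterlim_R_scal, Rpower_lim_0. lra.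
  - apply filterlim_const.
Qed.

Lemma beta_antideriv_lim_1 (r q : R) : 0 < r -> 0 < q ->
  filterlim (beta_antideriv r q) (at_left 1) (locally 0).
Proof.
  intros Hr Hq.
  apply (filterlim_le_le (fun t => - / (2 * q) * Rpower (1 - t ^ 2) q) _ (fun _ => 0) (Finite 0)).
  - eapply filter_imp; [|exact at_left_1_open01]. intros t Ht.
    pose proof (beta_antideriv_bounds r q t Hr Hq Ht). unfold Rdiv in *. lra.
  - replace (Finite 0) with (Finite (- / (2 * q) * 0)) by (f_equal; ring).
    apply filterlim_R_scal.
    exact (filterlim_comp _ _ _ _ _ _ _ _ filterlim_one_minus_sq_at_left_1 (Rpower_lim_0 q Hq)).
  - apply filterlim_const.
Qed.

Lemma beta_mass_succ (r q : R) : 0 < r -> 0 < q ->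
  beta_mass (r + 1) q = r / (r + q) * beta_mass r q.
Proof.
  intros Hr Hq.
  (* Integration by parts: [beta_antideriv] is a primitive of [dU] vanishing at both ends. *)
  set (dU t := beta_weight (r + 1) q t - r / q * (beta_weight r q t - beta_weight (r + 1) q t)).
  assert (Hzero : is_RInt_gen dU (at_right 0) (at_left 1) (0 - 0)).
  { apply (is_RInt_gen_open01_prim dU (beta_antideriv r q));
      [| apply beta_antideriv_lim_0 | apply beta_antideriv_lim_1]; try assumption.
    intros a b Ha Hb. apply (is_RInt_derive (V := R_CompleteNormedModule)).
    - intros t Ht. apply is_derive_beta_antideriv; [exact Hq|].
      now apply (open01_of_Rmin_Rmax a b).
    - intros t Ht. apply (open01_of_Rmin_Rmax a b) in Ht; [|exact Ha | exact Hb].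
      unfold dU. apply continuous_R_minus; [now apply continuous_beta_weight|].
      apply continuous_R_mult; [apply continuous_const|].
      apply continuous_R_minus; now apply continuous_beta_weight. }
  assert (Hmass : is_RInt_gen dU (at_right 0) (at_left 1)
            (beta_mass (r + 1) q - r / q * (beta_mass r q - beta_mass (r + 1) q))).
  { apply (is_RInt_gen_minus (V := R_NormedModule)); [apply is_RInt_gen_beta_mass; lra|].
    apply (is_RInt_gen_scal (V := R_NormedModule)).
    apply (is_RInt_gen_minus (V := R_NormedModule)); apply is_RInt_gen_beta_mass; lra. }
  assert (E : 0 - 0 = beta_mass (r + 1) q - r / q * (beta_mass r q - beta_mass (r + 1) q)).
  { rewrite <- (is_RInt_gen_unique _ _ Hzero). exact (is_RInt_gen_unique _ _ Hmass). }
  apply Rmult_eq_reg_l with (r + q); [|lra].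
  apply Rmult_eq_reg_l with (/ q); [|apply Rinv_neq_0_compat; lra].
  field_simplify; [|lra|lra]. field_simplify in E; [|lra]. lra.
Qed.

Lemma beta_mass_shift (r q : R) (k : nat) : 0 < r -> 0 < q ->
  beta_mass (r + INR k) q = beta_mass r q * poch r k / poch (r + q) k.
Proof.
  intros Hr Hq. induction k as [|k IH].
  - simpl. rewrite Rplus_0_r. field.
  - pose proof (pos_INR k). pose proof (poch_pos (r + q) k ltac:(lra)).
    rewrite S_INR, <- Rplus_assoc, beta_mass_succ, IH by lra. simpl poch. field. lra.
Qed.

Lemma beta_integrand_substitution (q r s : R) : 0 < s < 1 ->
  Rpower s (q - 1) * Rpower (1 - s) (r - 1)
    = -2 * (- / (2 * sqrt (1 - s)) * beta_weight r q (sqrt (1 - s))).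
Proof.
  intros Hs. unfold beta_weight.
  rewrite pow2_sqrt by lra. replace (1 - (1 - s)) with s by ring.
  rewrite <- (Rpower_sqrt (1 - s)), Rpower_mult by lra.
  replace (/ 2 * (2 * r - 1)) with ((r - 1) + / 2) by field.
  rewrite Rpower_plus, Rpower_sqrt by lra.
  pose proof (sqrt_lt_R0 (1 - s) ltac:(lra)). field. lra.
Qed.

(* The substitution s = 1 - t^2 relating [Beta] to [beta_mass]. *)
Lemma is_RInt_beta_integrand (q r a b : R) : 0 < a < 1 -> 0 < b < 1 ->
  is_RInt (fun s => Rpower s (q - 1) * Rpower (1 - s) (r - 1)) a b
    (2 * RInt (beta_weight r q) (sqrt (1 - b)) (sqrt (1 - a))).
Proof.
  intros Ha Hb. set (g s := sqrt (1 - s)). change (sqrt (1 - b)) with (g b). change (sqrt (1 - a)) with (g a).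
  assert (Hg : forall s, 0 < s < 1 -> 0 < g s < 1).
  { intros s Hs. unfold g. split; [apply sqrt_lt_R0; lra|].
    rewrite <- sqrt_1 at 2. apply sqrt_lt_1_alt. split; lra. }
  assert (Hcomp : is_RInt (fun s => - / (2 * sqrt (1 - s)) * beta_weight r q (g s)) a b
                    (RInt (beta_weight r q) (g a) (g b))).
  { apply (is_RInt_comp (V := R_CompleteNormedModule)).
    - intros s Hs. apply continuous_beta_weight, Hg, (open01_of_Rmin_Rmax a b); [lra | lra | exact Hs].
    - intros s Hs. apply (open01_of_Rmin_Rmax a b) in Hs; [|lra | lra]. unfold g. split.
      + auto_derive; [lra|]. match goal with |- ?u = ?v => change (u = v :> R) end.
        unfold Rminus. field. apply Rgt_not_eq, sqrt_lt_R0. lra.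
      + apply (ex_derive_continuous (V := R_NormedModule)). auto_derive.
        pose proof (sqrt_lt_R0 (1 + - s) ltac:(lra)). repeat split; lra. }
  rewrite <- (opp_RInt_swap (V := R_CompleteNormedModule))
    by (apply ex_RInt_open01; [apply continuous_beta_weight | apply Hg; lra | apply Hg; lra]).
  apply (is_RInt_ext (fun s => -2 * (- / (2 * sqrt (1 - s)) * beta_weight r q (g s)))).
  - intros s Hs. rewrite (beta_integrand_substitution q r s); [reflexivity|].
    apply (open01_of_Rmin_Rmax a b); lra.
  - replace (2 * opp (RInt (beta_weight r q) (g a) (g b)))
      with (scal (-2) (RInt (beta_weight r q) (g a) (g b)))
      by (unfold scal, opp; simpl; unfold mult; simpl; ring).
    exact (is_RInt_scal (V := R_NormedModule) _ _ _ _ _ Hcomp).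
Qed.

Lemma Beta_eq_beta_mass (q r : R) : 0 < q -> 0 < r -> Beta q r = 2 * beta_mass r q.
Proof.
  intros Hq Hr. unfold Beta. apply is_RInt_gen_unique.
  apply (filterlimi_lim_ext_loc
           (fun ab => 2 * RInt (beta_weight r q) (sqrt (1 - snd ab)) (sqrt (1 - fst ab)))).
  - eapply filter_imp; [|exact filter_prod_open01]. intros [a b] Hab; simpl in *.
    apply is_RInt_beta_integrand; lra.
  - apply filterlim_R_scal.
    refine (filterlim_comp _ _ _ _ _ _ _ _ (filterlim_pair _ _ _ _)
              (RInt_open01_lim _ _ (is_RInt_gen_beta_mass r q Hr Hq))).
    + exact (filterlim_comp _ _ _ _ _ _ _ _ filterlim_snd filterlim_sqrt_one_minus_at_left_1).
    + exact (filterlim_comp _ _ _ _ _ _ _ _ filterlim_fst filterlim_sqrt_one_minus_at_right_0).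
Qed.

(** * Raising a denominator parameter *)

Lemma continuous_PSeries_sq (d : nat -> R) (x t : R) : CV_radius d = p_infty ->
  continuous (fun t => PSeries d (- (x * t) ^ 2 / 4)) t.
Proof.
  intros Hd. apply (continuous_comp (fun t => - (x * t) ^ 2 / 4) (PSeries d)).
  - apply (ex_derive_continuous (V := R_NormedModule)). auto_derive. exact I.
  - apply continuity_pt_filterlim, PSeries_continuity. now rewrite Hd.
Qed.

Lemma is_RInt_gen_PSeries_raise (d : nat -> R) (p q x : R) :
  CV_radius d = p_infty -> 0 < p -> 0 < q ->
  is_RInt_gen (fun t => PSeries d (- (x * t) ^ 2 / 4) * beta_weight p q t) (at_right 0) (at_left 1)
    (beta_mass p q * PSeries (fun k => d k * poch p k / poch (p + q) k) (- x ^ 2 / 4)).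
Proof.
  intros Hd Hp Hq. set (z := - x ^ 2 / 4).
  assert (Hpk : forall k, 0 < p + INR k) by (intros k; pose proof (pos_INR k); lra).
  destruct (RInt_beta_weight_le p q Hp Hq) as [K HK].
  replace (beta_mass p q * PSeries (fun k => d k * poch p k / poch (p + q) k) z)
    with (Series (fun k => d k * z ^ k * beta_mass (p + INR k) q)).
  - apply (is_RInt_gen_open01_series _ (fun k => beta_weight (p + INR k) q) _ (beta_weight p q) _ K).
    + apply CV_disk_inside. rewrite Hd. exact I.
    + intros k t Ht. now apply continuous_beta_weight.
    + intros t Ht. now apply continuous_beta_weight.
    + intros t Ht. apply continuous_R_mult; [now apply continuous_PSeries_sq|].
      now apply continuous_beta_weight.
    + intros t Ht. unfold PSeries. rewrite <- Series_scal_r. apply Series_ext. intros k.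
      rewrite <- beta_weight_shift by lra. unfold z.
      replace (- (x * t) ^ 2 / 4) with (- x ^ 2 / 4 * t ^ 2) by field.
      rewrite Rpow_mult_distr. ring.
    + intros k t Ht. rewrite Rabs_pos_eq by apply Rlt_le, beta_weight_pos.
      now apply beta_weight_shift_le.
    + exact HK.
    + intros k. apply is_RInt_gen_beta_mass; [apply Hpk | exact Hq].
  - unfold PSeries. rewrite <- Series_scal_l. apply Series_ext. intros k.
    rewrite beta_mass_shift by assumption. field. apply Rgt_not_eq, poch_pos. lra.
Qed.

Lemma F12_0 (a b c : R) : F12 a b c 0 = 1.
Proof.
  rewrite F12_PSeries. replace (- 0 ^ 2 / 4) with 0 by field. rewrite PSeries_0.
  unfold F12_coef. simpl. field.
Qed.

Lemma F12_comm (a b c x : R) : F12 a b c x = F12 a c b x.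
Proof. unfold F12. apply Series_ext. intros k. do 2 f_equal. ring. Qed.

Lemma continuous_F12_scaled (a b c x t : R) : 0 < a -> 0 < b -> 0 < c ->
  continuous (fun t => F12 a b c (x * t)) t.
Proof.
  intros Ha Hb Hc. apply (continuous_ext (fun t => PSeries (F12_coef a b c) (- (x * t) ^ 2 / 4))).
  - intros s. now rewrite F12_PSeries.
  - now apply continuous_PSeries_sq, CV_radius_F12_coef.
Qed.

Lemma is_RInt_gen_F12_raise (a b c q x : R) : 0 < a -> 0 < b -> 0 < c -> 0 < q ->
  is_RInt_gen (fun t => F12 a b c (x * t) * beta_weight c q t) (at_right 0) (at_left 1)
    (beta_mass c q * F12 a b (c + q) x).
Proof.
  intros Ha Hb Hc Hq.
  replace (F12 a b (c + q) x)
    with (PSeries (fun k => F12_coef a b c k * poch c k / poch (c + q) k) (- x ^ 2 / 4)).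
  - exact (is_RInt_gen_PSeries_raise _ c q x (CV_radius_F12_coef a b c Ha Hb Hc) Hc Hq).
  - rewrite F12_PSeries. apply PSeries_ext. intros k. unfold F12_coef.
    pose proof (INR_fact_lt_0 k). pose proof (poch_pos b k Hb).
    pose proof (poch_pos c k Hc). pose proof (poch_pos (c + q) k ltac:(lra)).
    field. repeat split; lra.
Qed.

Lemma continuous_pos_right_0 (g : R -> R) : continuous g 0 -> 0 < g 0 ->
  exists t0, 0 < t0 < 1 /\ 0 < g t0.
Proof.
  intros Hg Hg0. assert (Hhalf : 0 < g 0 / 2) by lra.
  destruct (proj1 (filterlim_locally g (g 0)) Hg (mkposreal _ Hhalf)) as [d Hd].
  pose proof (cond_pos d). exists (Rmin (d / 2) (1 / 2)).
  pose proof (Rmin_l (d / 2) (1 / 2)). pose proof (Rmin_r (d / 2) (1 / 2)).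
  assert (Ht0 : 0 < Rmin (d / 2) (1 / 2)) by (apply Rmin_glb_lt; lra).
  split; [lra|].
  assert (Hball : ball 0 d (Rmin (d / 2) (1 / 2)))
    by (change (Rabs (Rmin (d / 2) (1 / 2) - 0) < d); rewrite Rminus_0_r, Rabs_pos_eq; lra).
  specialize (Hd _ Hball). change (Rabs (g (Rmin (d / 2) (1 / 2)) - g 0) < g 0 / 2) in Hd.
  apply Rabs_def2 in Hd. lra.
Qed.

Lemma F12_pos_raise (a b c q : R) : 0 < a -> 0 < b -> 0 < c -> 0 < q ->
  (forall y, 0 < y -> 0 <= F12 a b c y) -> forall x, 0 < x -> 0 < F12 a b (c + q) x.
Proof.
  intros Ha Hb Hc Hq Hnn x Hx.
  destruct (continuous_pos_right_0 (fun t => F12 a b c (x * t))) as [t0 [Ht0 HFt0]].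
  - now apply continuous_F12_scaled.
  - rewrite Rmult_0_r, F12_0. lra.
  - enough (0 < beta_mass c q * F12 a b (c + q) x) by (pose proof (beta_mass_pos c q Hc Hq); nra).
    apply (is_RInt_gen_open01_pos (fun t => F12 a b c (x * t) * beta_weight c q t)) with (t0 := t0);
      [| | exact Ht0 | |].
    + intros t Ht. apply continuous_R_mult; [now apply continuous_F12_scaled | now apply continuous_beta_weight].
    + intros t Ht. apply Rmult_le_pos; [apply Hnn; nra | apply Rlt_le, beta_weight_pos].
    + apply Rmult_lt_0_compat; [exact HFt0 | apply beta_weight_pos].
    + now apply is_RInt_gen_F12_raise.
Qed.

(** * The product formula *)

Definition J_coef (al : R) (k : nat) : R := / (INR (fact k) * poch al k).

Lemma JJ_PSeries (al x : R) : JJ al x = PSeries (J_coef (al + 1)) (- x ^ 2 / 4).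
Proof. unfold JJ, PSeries, J_coef. apply Series_ext. intros n. unfold Rdiv. ring. Qed.

Lemma J_coef_pos (al : R) (k : nat) : 0 < al -> 0 < J_coef al k.
Proof.
  intros Hal. apply Rinv_0_lt_compat, Rmult_lt_0_compat; [apply INR_fact_lt_0 | now apply poch_pos].
Qed.

Lemma J_coef_S (al : R) (k : nat) : 0 < al ->
  J_coef al (S k) = J_coef al k / (INR (S k) * (al + INR k)).
Proof.
  intros Hal. unfold J_coef. rewrite fact_simpl, mult_INR. simpl poch.
  pose proof (INR_fact_lt_0 k). pose proof (poch_pos al k Hal). pose proof (pos_INR k).
  rewrite S_INR. field. repeat split; lra.
Qed.

Lemma CV_radius_J_coef (al : R) : 0 < al -> CV_radius (J_coef al) = p_infty.
Proof.
  intros Hal. apply CV_radius_infinite_ratio_le with (K := / al).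
  - intros n. apply Rgt_not_eq, J_coef_pos, Hal.
  - intros n. pose proof (J_coef_pos al n Hal). pose proof (pos_INR n).
    rewrite J_coef_S by exact Hal. rewrite S_INR.
    replace (J_coef al n / ((INR n + 1) * (al + INR n)) / J_coef al n)
      with (/ (al + INR n) / (INR n + 1)) by (field; repeat split; lra).
    rewrite Rabs_pos_eq by (apply Rlt_le, Rdiv_lt_0_compat; [apply Rinv_0_lt_compat|]; lra).
    apply Rmult_le_compat_r; [apply Rlt_le, Rinv_0_lt_compat; lra|].
    apply Rinv_le_contravar; lra.
Qed.

Lemma sum_f_R0_telescope (G : nat -> R) (n : nat) :
  sum_f_R0 (fun j => G (S j) - G j) n = G (S n) - G 0%nat.
Proof. induction n as [|n IH]; simpl; [ring|]. rewrite IH. ring. Qed.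

Section ProductFormula.

Variable a : R.
Hypothesis Ha : 0 < a.

Local Notation u := (J_coef (a + 1/2)).

(* Zeilberger certificate for the recurrence of the Cauchy square of [u]. *)
Let cert (n j : nat) : R :=
  u j * u (S n - j)%nat * INR j * (a + 1/2 + INR j - 1) * (2 * INR j - 3 * INR n - 2 * a - 2).

Lemma cauchy_square_certificate (n j : nat) : (j <= n)%nat ->
  - (4 * a + 4 * INR n) * (u j * u (n - j)%nat)
    + (INR n + 1) * (a + 1/2 + INR n) * (2 * a + INR n) * (u j * u (S n - j)%nat)
  = cert n (S j) - cert n j.
Proof.
  intros Hj. unfold cert.
  replace (S n - S j)%nat with (n - j)%nat by lia.
  replace (S n - j)%nat with (S (n - j)) by lia.
  rewrite !J_coef_S, !S_INR, !minus_INR by (assumption || lra).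
  pose proof (pos_INR j). pose proof (pos_INR n). pose proof (le_INR j n Hj).
  field. repeat split; lra.
Qed.

Lemma cauchy_square_rec (n : nat) :
  (INR n + 1) * (a + 1/2 + INR n) * (2 * a + INR n) * PS_mult u u (S n)
    = (4 * a + 4 * INR n) * PS_mult u u n.
Proof.
  set (c := (INR n + 1) * (a + 1/2 + INR n) * (2 * a + INR n)).
  pose proof (sum_f_R0_telescope (cert n) n) as T.
  rewrite (sum_eq _ (fun j => u j * u (n - j)%nat * (- (4 * a + 4 * INR n))
                             + u j * u (S n - j)%nat * c)) in T
    by (intros j Hj; rewrite <- cauchy_square_certificate by exact Hj; unfold c; ring).
  rewrite plus_sum, <- !scal_sum in T.
  unfold PS_mult. rewrite tech5. replace (S n - S n)%nat with 0%nat by lia.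
  unfold cert in T. replace (S n - 0)%nat with (S n) in T by lia.
  replace (S n - S n)%nat with 0%nat in T by lia.
  rewrite S_INR in T. simpl INR in T. unfold c in *. nra.
Qed.

Lemma cauchy_square_closed (n : nat) :
  PS_mult u u n = F12_coef a (a + 1/2) (2 * a) n * 4 ^ n.
Proof.
  induction n as [|n IH].
  - unfold PS_mult, J_coef, F12_coef. simpl. field.
  - pose proof (cauchy_square_rec n) as Hrec. rewrite IH in Hrec. pose proof (pos_INR n).
    apply Rmult_eq_reg_l with ((INR n + 1) * (a + 1/2 + INR n) * (2 * a + INR n));
      [|apply Rgt_not_eq; repeat apply Rmult_lt_0_compat; lra].
    rewrite Hrec, F12_coef_S by lra. rewrite S_INR. simpl pow. field. lra.
Qed.

End ProductFormula.

Lemma JJ_sq_F12 (a z : R) : 0 < a -> JJ (a - 1/2) z ^ 2 = F12 a (a + 1/2) (2 * a) (2 * z).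
Proof.
  intros Ha. rewrite JJ_PSeries, F12_PSeries. replace (a - 1/2 + 1) with (a + 1/2) by field.
  assert (Hrad : Rbar_lt (Rabs (- z ^ 2 / 4)) (CV_radius (J_coef (a + 1/2))))
    by (rewrite CV_radius_J_coef by lra; exact I).
  rewrite <- Rsqr_pow2. unfold Rsqr. rewrite <- PSeries_mult by exact Hrad.
  unfold PSeries. apply Series_ext. intros n. rewrite cauchy_square_closed by exact Ha.
  replace (- (2 * z) ^ 2 / 4) with (4 * (- z ^ 2 / 4)) by field.
  rewrite Rpow_mult_distr. ring.
Qed.

(** * A positive zero of the Bessel function *)

Lemma sturm_sin_no_positive (y dy Q : R -> R) (L : R) :
  (forall x, L <= x <= L + 2 * PI -> is_derive y x (dy x) /\ is_derive dy x (- Q x * y x)) ->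
  (forall x, L <= x <= L + 2 * PI -> 1/4 <= Q x) ->
  ~ (forall x, L <= x <= L + 2 * PI -> 0 < y x).
Proof.
  intros Hode HQ Hpos. pose proof PI_RGT_0 as Hpi.
  (* [W] is the Wronskian of [y] and [s], a solution of [s'' = - s / 4]. *)
  set (s x := sin ((x - L) / 2)). set (c x := cos ((x - L) / 2) / 2).
  set (W x := y x * c x - dy x * s x).
  set (dW x := (Q x - 1/4) * y x * s x).
  assert (HdW : forall x, L <= x <= L + 2 * PI -> is_derive W x (dW x)).
  { intros x Hx. destruct (Hode x Hx) as [Dy Ddy].
    assert (Dc : is_derive c x (- s x / 4))
      by (unfold c, s; auto_derive; [exact I | unfold Rminus, Rdiv; field]).
    assert (Ds : is_derive s x (c x))
      by (unfold c, s; auto_derive; [exact I | unfold Rminus, Rdiv; field]).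
    refine (is_derive_ext_val _ _ _ _ _ _ _ (is_derive_minus _ _ x _ _
              (is_derive_mult _ _ x _ _ Dy Dc Rmult_comm) (is_derive_mult _ _ x _ _ Ddy Ds Rmult_comm)));
      [reflexivity|].
    unfold dW, minus, plus, opp; simpl; unfold mult; simpl.
    field. }
  destruct (MVT_gen W L (L + 2 * PI) dW) as [x [Hx HMVT]].
  - intros x Hx. rewrite Rmin_left, Rmax_right in Hx by lra. apply HdW. lra.
  - intros x Hx. rewrite Rmin_left, Rmax_right in Hx by lra.
    apply continuity_pt_filterlim, (ex_derive_continuous (V := R_NormedModule)).
    eexists. now apply HdW.
  - rewrite Rmin_left, Rmax_right in Hx by lra.
    assert (HWL : W L = y L / 2).
    { unfold W, s, c. replace ((L - L) / 2) with 0 by field. rewrite sin_0, cos_0. field. }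
    assert (HWR : W (L + 2 * PI) = - (y (L + 2 * PI) / 2)).
    { unfold W, s, c. replace ((L + 2 * PI - L) / 2) with PI by field. rewrite sin_PI, cos_PI. field. }
    assert (0 <= dW x).
    { unfold dW. apply Rmult_le_pos; [apply Rmult_le_pos|].
      - pose proof (HQ x Hx). lra.
      - apply Rlt_le, Hpos, Hx.
      - unfold s. apply sin_ge_0; lra. }
    pose proof (Hpos L ltac:(lra)). pose proof (Hpos (L + 2 * PI) ltac:(lra)). nra.
Qed.

Lemma is_derive_neg_sq_div_4 (x : R) : is_derive (fun x => - x ^ 2 / 4) x (- x / 2).
Proof. auto_derive; [exact I | field]. Qed.

Section BesselZero.

Variable a : R.
Hypothesis Ha : 0 < a.

Let u0 := J_coef (a + 1/2).
Let u1 := PS_derive u0.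
Let u2 := PS_derive u1.

Let f (x : R) : R := PSeries u0 (- x ^ 2 / 4).
Let df (x : R) : R := PSeries u1 (- x ^ 2 / 4) * (- x / 2).
Let ddf (x : R) : R := PSeries u2 (- x ^ 2 / 4) * (x ^ 2 / 4) - PSeries u1 (- x ^ 2 / 4) / 2.

Lemma bessel_coef_ode (k : nat) : PS_incr_1 u2 k + (a + 1/2) * u1 k = u0 k.
Proof.
  destruct k as [|m]; [change (PS_incr_1 u2 0) with 0 | change (PS_incr_1 u2 (S m)) with (u2 m)];
    unfold u2, u1, u0, PS_derive.
  - rewrite (J_coef_S _ 0) by lra. simpl INR. field. lra.
  - rewrite (J_coef_S _ (S m)) by lra. pose proof (pos_INR m). rewrite !S_INR. field. lra.
Qed.

Lemma CV_radius_bessel_derivs : CV_radius u0 = p_infty /\ CV_radius u1 = p_infty /\ CV_radius u2 = p_infty.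
Proof.
  unfold u2, u1. rewrite !CV_radius_derive. assert (CV_radius u0 = p_infty) by (apply CV_radius_J_coef; lra).
  auto.
Qed.

Lemma bessel_series_ode (w : R) :
  w * PSeries u2 w + (a + 1/2) * PSeries u1 w = PSeries u0 w.
Proof.
  destruct CV_radius_bessel_derivs as [_ [R1 R2]].
  rewrite <- PSeries_incr_1. unfold PSeries. rewrite <- Series_scal_l, <- Series_plus.
  - apply Series_ext. intros k. rewrite <- bessel_coef_ode. ring.
  - apply ex_series_Rabs, CV_disk_inside. rewrite CV_radius_incr_1, R2. exact I.
  - apply (ex_series_scal_l (V := R_NormedModule)), ex_series_Rabs, CV_disk_inside. rewrite R1. exact I.
Qed.

Lemma is_derive_bessel_f (x : R) : is_derive f x (df x).
Proof.
  destruct CV_radius_bessel_derivs as [R0 _].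
  refine (is_derive_ext_val _ _ _ _ _ _ _ (is_derive_comp (PSeries u0) (fun x => - x ^ 2 / 4) x _ _
            (is_derive_PSeries _ _ _) (is_derive_neg_sq_div_4 x))); [reflexivity | |].
  - unfold df, u1, scal; simpl; unfold mult; simpl. ring.
  - rewrite R0. exact I.
Qed.

Lemma is_derive_bessel_df (x : R) : is_derive df x (ddf x).
Proof.
  destruct CV_radius_bessel_derivs as [_ [R1 _]].
  pose proof (is_derive_comp (PSeries u1) (fun x => - x ^ 2 / 4) x _ _
                (is_derive_PSeries u1 (- x ^ 2 / 4) ltac:(rewrite R1; exact I))
                (is_derive_neg_sq_div_4 x)) as D1.
  assert (D2 : is_derive (fun x => - x / 2) x (- / 2)) by (auto_derive; [exact I | field]).
  refine (is_derive_ext_val _ _ _ _ _ _ _ (is_derive_mult _ _ x _ _ D1 D2 Rmult_comm));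
    [reflexivity|].
  unfold ddf, u2, scal, plus; simpl; unfold mult; simpl. field.
Qed.

Lemma bessel_ode (x : R) : x * ddf x + 2 * a * df x + x * f x = 0.
Proof.
  unfold ddf, df, f. rewrite <- (bessel_series_ode (- x ^ 2 / 4)). field.
Qed.

Let y (x : R) : R := Rpower x a * f x.
Let dy (x : R) : R := Rpower x a * (df x + a / x * f x).

Lemma is_derive_bessel_y (x : R) : 0 < x -> is_derive y x (dy x).
Proof.
  intros Hx.
  refine (is_derive_ext_val _ _ _ _ _ _ _
            (is_derive_mult _ _ x _ _ (is_derive_Rpower a x Hx) (is_derive_bessel_f x) Rmult_comm));
    [reflexivity|].
  unfold dy, scal, plus; simpl; unfold mult; simpl.
  replace (Rpower x a) with (Rpower x (a - 1) * x) by (rewrite <- Rpower_plus_1 by lra; f_equal; ring).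
  field. lra.
Qed.

Lemma is_derive_bessel_dy (x : R) : 0 < x -> is_derive dy x (- (1 - a * (a - 1) / x ^ 2) * y x).
Proof.
  intros Hx.
  assert (Dinv : is_derive (fun x => a / x) x (- a / x ^ 2)) by (auto_derive; [lra | field; lra]).
  assert (D : is_derive (fun x => df x + a / x * f x) x (ddf x + (a / x * df x - a / x ^ 2 * f x))).
  { apply (is_derive_plus (V := R_NormedModule)); [apply is_derive_bessel_df|].
    refine (is_derive_ext_val _ _ _ _ _ _ _
              (is_derive_mult _ _ x _ _ Dinv (is_derive_bessel_f x) Rmult_comm)); [reflexivity|].
    unfold plus; simpl; unfold mult; simpl. field. lra. }
  refine (is_derive_ext_val _ _ _ _ _ _ _
            (is_derive_mult _ _ x _ _ (is_derive_Rpower a x Hx) D Rmult_comm)); [reflexivity|].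
  unfold y, scal, plus; simpl; unfold mult; simpl.
  assert (Hddf : ddf x = - (2 * a * df x + x * f x) / x).
  { pose proof (bessel_ode x) as E. apply (Rmult_eq_reg_l x); [|lra].
    replace (x * (- (2 * a * df x + x * f x) / x)) with (- (2 * a * df x + x * f x)) by (field; lra).
    lra. }
  rewrite Hddf.
  replace (Rpower x a) with (Rpower x (a - 1) * x) by (rewrite <- Rpower_plus_1 by lra; f_equal; ring).
  field. lra.
Qed.

Lemma bessel_f_0 : f 0 = 1.
Proof.
  unfold f. replace (- 0 ^ 2 / 4) with 0 by field. rewrite PSeries_0.
  unfold u0, J_coef. simpl. field.
Qed.

Lemma bessel_f_has_pos_zero : exists z, 0 < z /\ f z = 0.
Proof.
  apply NNPP. intros Hno.
  assert (Hpos : forall x, 0 < x -> 0 < f x).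
  { intros x Hx. destruct (Rlt_le_dec 0 (f x)) as [|Hle]; [assumption | exfalso].
    assert (Hcont : continuity f).
    { intros t. apply continuity_pt_filterlim, (ex_derive_continuous (V := R_NormedModule)).
      eexists. apply is_derive_bessel_f. }
    destruct (IVT_gen f 0 x 0 Hcont) as [c [Hc Hfc]].
    { rewrite bessel_f_0, Rmin_right, Rmax_left by lra. lra. }
    rewrite Rmin_left, Rmax_right in Hc by lra.
    destruct (Req_dec c 0) as [-> | Hc0]; [rewrite bessel_f_0 in Hfc; lra|].
    apply Hno. exists c. split; [lra | exact Hfc]. }
  (* On [2a+1, +oo) the coefficient 1 - a(a-1)/x^2 is at least 1/4. *)
  apply (sturm_sin_no_positive y dy (fun x => 1 - a * (a - 1) / x ^ 2) (2 * a + 1)).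
  - intros x Hx. split; [apply is_derive_bessel_y | apply is_derive_bessel_dy]; lra.
  - intros x Hx. assert (0 < x ^ 2) by (apply pow_lt; lra).
    enough (a * (a - 1) / x ^ 2 <= 3 / 4) by lra.
    apply Rmult_le_reg_r with (x ^ 2); [assumption|].
    unfold Rdiv. rewrite Rmult_assoc, Rinv_l, Rmult_1_r by lra. nra.
  - intros x Hx. apply Rmult_lt_0_compat; [apply Rpower_pos | apply Hpos; lra].
Qed.

End BesselZero.

Lemma JJ_has_pos_zero (a : R) : 0 < a -> exists z, 0 < z /\ JJ (a - 1/2) z = 0.
Proof.
  intros Ha. destruct (bessel_f_has_pos_zero a Ha) as [z Hz]. exists z.
  rewrite JJ_PSeries. replace (a - 1/2 + 1) with (a + 1/2) by field. exact Hz.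
Qed.

(** * Positivity of 1F2 *)

Lemma F12_bessel_sq (a z : R) : 0 < a -> F12 a (a + 1/2) (2 * a) z = JJ (a - 1/2) (z / 2) ^ 2.
Proof. intros Ha. rewrite JJ_sq_F12 by exact Ha. f_equal. field. Qed.

Lemma F12_bessel_sq_nonneg (a z : R) : 0 < a -> 0 <= F12 a (a + 1/2) (2 * a) z.
Proof. intros Ha. rewrite F12_bessel_sq by exact Ha. apply pow2_ge_0. Qed.

Lemma F12_bessel_sq_has_pos_zero (a : R) : 0 < a ->
  exists x, 0 < x /\ F12 a (a + 1/2) (2 * a) x = 0.
Proof.
  intros Ha. destruct (JJ_has_pos_zero a Ha) as [z [Hz Hzero]]. exists (2 * z). split; [lra|].
  rewrite F12_bessel_sq by exact Ha. replace (2 * z / 2) with z by field. rewrite Hzero. ring.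
Qed.

Lemma F12_pos_raise_le (a b c c' : R) : 0 < a -> 0 < b -> 0 < c -> c <= c' ->
  (forall y, 0 < y -> 0 < F12 a b c y) -> forall x, 0 < x -> 0 < F12 a b c' x.
Proof.
  intros Ha Hb Hc [Hlt | <-] Hpos x Hx; [|now apply Hpos].
  replace c' with (c + (c' - c)) by ring.
  apply F12_pos_raise; try lra. intros y Hy. now apply Rlt_le, Hpos.
Qed.

Lemma F12_pos_above_bessel_sq (a b c : R) : 0 < a -> a + 1/2 <= b -> 2 * a <= c ->
  3 * a + 1/2 < b + c -> forall x, 0 < x -> 0 < F12 a b c x.
Proof.
  intros Ha Hb Hc Hsum x Hx. rewrite F12_comm.
  destruct Hc as [Hc | <-].
  - refine (F12_pos_raise_le a c (a + 1/2) b Ha ltac:(lra) ltac:(lra) Hb _ x Hx).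
    intros y Hy. rewrite F12_comm. replace c with (2 * a + (c - 2 * a)) by ring.
    apply F12_pos_raise; try lra. intros z _. now apply F12_bessel_sq_nonneg.
  - replace b with (a + 1/2 + (b - (a + 1/2))) by ring.
    apply F12_pos_raise; try lra. intros y _. rewrite F12_comm. now apply F12_bessel_sq_nonneg.
Qed.

Lemma P12_of_bounds (a b c : R) : 0 < a ->
  (a + 1/2 <= b /\ 2 * a <= c) \/ (2 * a <= b /\ a + 1/2 <= c) -> 3 * a + 1/2 < b + c ->
  P12 a b c.
Proof.
  intros Ha Hbc Hsum. repeat split; try (destruct Hbc; lra).
  intros x Hx. destruct Hbc as [[Hb Hc] | [Hb Hc]].
  - now apply F12_pos_above_bessel_sq.
  - rewrite F12_comm. apply F12_pos_above_bessel_sq; lra.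
Qed.

Lemma P12_at_c_2a_iff (a b : R) : 0 < a -> P12 a b (2 * a) <-> a + 1/2 < b.
Proof.
  intros Ha. split; [|intros Hb; apply P12_of_bounds; lra].
  intros [_ [Hb [_ Hpos]]]. apply Rnot_le_lt. intros Hle.
  destruct (F12_bessel_sq_has_pos_zero a Ha) as [x [Hx Hzero]].
  enough (0 < F12 a (a + 1/2) (2 * a) x) by lra.
  rewrite F12_comm. refine (F12_pos_raise_le a (2 * a) b (a + 1/2) Ha ltac:(lra) Hb Hle _ x Hx).
  intros y Hy. rewrite F12_comm. now apply Hpos.
Qed.

Lemma P12_at_b_half_iff (a c : R) : 0 < a -> P12 a (a + 1/2) c <-> 2 * a < c.
Proof.
  intros Ha. split; [|intros Hc; apply P12_of_bounds; lra].
  intros [_ [_ [Hc Hpos]]]. apply Rnot_le_lt. intros Hle.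
  destruct (F12_bessel_sq_has_pos_zero a Ha) as [x [Hx Hzero]].
  enough (0 < F12 a (a + 1/2) (2 * a) x) by lra.
  exact (F12_pos_raise_le a (a + 1/2) c (2 * a) Ha ltac:(lra) Hc Hle Hpos x Hx).
Qed.

(* The exponent [e] is kept free so that both [2 * a] and [4 * a - 1] match it syntactically. *)
Lemma F12_bessel_sq_integral (a b c q x e : R) : 0 < a -> 0 < b -> 0 < c -> 0 < q ->
  (forall z, F12 a b c z = JJ (a - 1/2) (z / 2) ^ 2) -> e = 2 * c - 1 ->
  exists I, is_RInt_gen (fun t => JJ (a - 1/2) (x * t / 2) ^ 2 * Rpower (1 - t ^ 2) (q - 1) * Rpower t e)
              (at_right 0) (at_left 1) I /\
            F12 a b (c + q) x = 2 / Beta q c * I.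
Proof.
  intros Ha Hb Hc Hq Hsq ->.
  exists (beta_mass c q * F12 a b (c + q) x). split.
  - eapply is_RInt_gen_ext; [|exact (is_RInt_gen_F12_raise a b c q x Ha Hb Hc Hq)].
    apply filter_forall. intros ab t _. rewrite Hsq. unfold beta_weight.
    match goal with |- ?u = ?v => change (u = v :> R) end. ring.
  - rewrite Beta_eq_beta_mass by assumption. pose proof (beta_mass_pos c q Hc Hq). field. lra.
Qed.

Theorem theorem2 (a : R) (ha : 0 < a) :
  (forall b c : R,
      ((a + 1/2 <= b /\ 2 * a <= c) \/ (2 * a <= b /\ a + 1/2 <= c)) ->
      3 * a + 1/2 < b + c ->
      P12 a b c) /\
  ((forall b : R, P12 a b (2 * a) <-> a + 1/2 < b) /\
   (forall delta x : R, 0 < delta -> 0 < x ->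
      exists I : R,
        is_RInt_gen
          (fun t => (JJ (a - 1/2) (x * t / 2)) ^ 2
                    * Rpower (1 - t ^ 2) (delta - 1) * Rpower t (2 * a))
          (at_right 0) (at_left 1) I /\
        F12 a (a + 1/2 + delta) (2 * a) x = 2 / Beta delta (a + 1/2) * I /\
        0 < F12 a (a + 1/2 + delta) (2 * a) x)) /\
  ((forall c : R, P12 a (a + 1/2) c <-> 2 * a < c) /\
   (forall eps x : R, 0 < eps -> 0 < x ->
      exists I : R,
        is_RInt_gen
          (fun t => (JJ (a - 1/2) (x * t / 2)) ^ 2
                    * Rpower (1 - t ^ 2) (eps - 1) * Rpower t (4 * a - 1))
          (at_right 0) (at_left 1) I /\
        F12 a (a + 1/2) (2 * a + eps) x = 2 / Beta eps (2 * a) * I /\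
        0 < F12 a (a + 1/2) (2 * a + eps) x)).
Proof.
  split; [intros b c; now apply P12_of_bounds|].
  split; split.
  - intros b. now apply P12_at_c_2a_iff.
  - intros delta x Hdelta Hx.
    destruct (F12_bessel_sq_integral a (2 * a) (a + 1/2) delta x (2 * a)) as [I [HI HF]];
      try lra; [intros z; rewrite F12_comm; now apply F12_bessel_sq|].
    rewrite F12_comm in HF. exists I. split; [exact HI | split; [exact HF|]].
    destruct (proj2 (P12_at_c_2a_iff a (a + 1/2 + delta) ha)) as [_ [_ [_ Hpos]]]; [lra | exact (Hpos x Hx)].
  - intros c. now apply P12_at_b_half_iff.
  - intros eps x Heps Hx.
    destruct (F12_bessel_sq_integral a (a + 1/2) (2 * a) eps x (4 * a - 1)) as [I [HI HF]];
      try lra; [intros z; now apply F12_bessel_sq|].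
    exists I. split; [exact HI | split; [exact HF|]].
    destruct (proj2 (P12_at_b_half_iff a (2 * a + eps) ha)) as [_ [_ [_ Hpos]]]; [lra | exact (Hpos x Hx)].
Qed.
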